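(* Let $\ell_1,\ell_2$ be two perpendicular lines in the hyperbolic plane crossing at a point $x$, dividing the plane into four quadrants. Then for every point $p$ in one quadrant and every point $q$ in the opposite quadrant, the hyperbolic geodesic segment from $p$ to $q$ passes within hyperbolic distance $\ln(1+\sqrt{2})$ of $x$.
   Context: The hyperbolic plane is the complete simply connected Riemannian surface of constant curvature $-1$; lines are complete geodesics. Two quadrants are opposite if they share only the point $x$. *)

(* Hyperboloid model of the hyperbolic plane. *)
From HB Require Import structures.
From mathcomp Require Import all_boot all_order all_algebra.
From mathcomp Require Import all_classical all_reals all_analysis.
Set Implicit Arguments. Unset Strict Implicit. Unset Printing Implicit Defensive.
Import Order.TTheory GRing.Theory Num.Theory.
Local Open Scope ring_scope.

Definition mpt (R : realType) := (R * R * R)%type.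

Definition mink (R : realType) (u v : mpt R) : R :=
  u.1.1 * v.1.1 + u.1.2 * v.1.2 - u.2 * v.2.

Definition onH (R : realType) (p : mpt R) : Prop :=
  mink p p = -1 /\ 0 < p.2.

(* Hyperbolic distance: cosh d(p,q) = -<p,q>, i.e. d = arcosh(-<p,q>). *)
Definition arcosh (R : realType) (t : R) : R := ln (t + Num.sqrt (t ^+ 2 - 1)).
Definition hdist (R : realType) (p q : mpt R) : R := arcosh (- mink p q).

(* Lines: the hyperbolic line with (spacelike unit) normal n is
   { p in H | <n,p> = 0 }.  It bounds the two closed half-planes
   { <n,p> >= 0 } and { <n,p> <= 0 }. *)
Definition unit_normal (R : realType) (n : mpt R) : Prop := mink n n = 1.
Definition hline (R : realType) (n : mpt R) : set (mpt R) :=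
  [set p | onH p /\ mink n p = 0].

(* Closed quadrant determined by the lines with normals n1, n2 (the side
   where both forms are >= 0); replacing n1, n2 by -n1, -n2 gives the
   opposite quadrant. *)
Definition quadrant (R : realType) (n1 n2 : mpt R) : set (mpt R) :=
  [set p | onH p /\ 0 <= mink n1 p /\ 0 <= mink n2 p].

Definition mscale (R : realType) (a : R) (u : mpt R) : mpt R :=
  (a * u.1.1, a * u.1.2, a * u.2).
Definition madd (R : realType) (u v : mpt R) : mpt R :=
  (u.1.1 + v.1.1, u.1.2 + v.1.2, u.2 + v.2).
Definition mneg (R : realType) (u : mpt R) : mpt R := mscale (-1) u.

(* Geodesic segment [p,q]: points of H that are nonnegative combinations
   of p and q (the arc of H cut out by the plane span{p,q} between p, q). *)
Definition geod_seg (R : realType) (p q : mpt R) : set (mpt R) :=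
  [set z | onH z /\ exists a b : R, 0 <= a /\ 0 <= b /\
                                     z = madd (mscale a p) (mscale b q)].

From Pilot Require Import Defs.
From HB Require Import structures.
From mathcomp Require Import all_boot all_order all_algebra.
From mathcomp Require Import all_classical all_reals all_analysis.
From mathcomp Require Import ring lra.
Import Order.TTheory GRing.Theory Num.Theory.
Set Implicit Arguments. Unset Strict Implicit.
Local Open Scope ring_scope.

(* Work in the Minkowski frame (x, n1, n2).  A point u of H has coordinates
   a = -<x,u>, b_i = <n_i,u>, with a^2 = 1 + b1^2 + b2^2 and cosh d(x,u) = a.
   For p = (a, b1, b2) in the quadrant (b_i >= 0) and q = (c, -d1, -d2) in the
   opposite one (d_i >= 0), the vector w = (d1 + d2) p + (b1 + b2) q has
   spacelike coordinates +-(b1 d2 - b2 d1); as b_i <= a and d_i <= c, twice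
   their size is at most its timelike coordinate (d1 + d2) a + (b1 + b2) c.
   So the point w / |w| of [p,q] has cosh d(x, w / |w|) <= sqrt 2, and
   arcosh (sqrt 2) = ln (1 + sqrt 2). *)

Lemma frame_completeness (R : comUnitRingType) (n : nat) (M J E : 'M[R]_n) :
  J *m J = 1%:M -> E *m E = 1%:M -> M *m J *m M^T = E -> M^T *m E *m M = J.
Proof.
move=> JJ EE ortho.
have /mulmx1C inv : (M *m J) *m (M^T *m E) = 1%:M by rewrite mulmxA ortho EE.
by rewrite -[LHS]mulmx1 -JJ !mulmxA -(mulmxA _ M) inv mul1mx.
Qed.

Lemma comb_gt0 (R : numDomainType) (a b s t : R) :
  0 <= a -> 0 <= b -> 0 < a + b -> 0 < s -> 0 < t -> 0 < a * s + b * t.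
Proof.
rewrite le_eqVlt => /orP[/eqP<- | a_gt0] b_ge0 ab_gt0 s_gt0 t_gt0.
  by move: ab_gt0; rewrite add0r mul0r => b_gt0; rewrite add0r mulr_gt0.
by rewrite ltr_pwDl ?mulr_ge0 ?mulr_gt0 // ltW.
Qed.

Lemma cross_diff_sqr_le (R : realDomainType) (a c b1 b2 d1 d2 : R) :
  0 <= b1 -> b1 <= a -> 0 <= b2 -> b2 <= a ->
  0 <= d1 -> d1 <= c -> 0 <= d2 -> d2 <= c ->
  4 * (b1 * d2 - b2 * d1) ^+ 2 <= ((d1 + d2) * a + (b1 + b2) * c) ^+ 2.
Proof.
move=> b1_ge0 b1_le b2_ge0 b2_le d1_ge0 d1_le d2_ge0 d2_le.
have a_ge0 := le_trans b1_ge0 b1_le; have c_ge0 := le_trans d1_ge0 d1_le.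
have b1d2_le : 2 * (b1 * d2) <= d2 * a + b1 * c.
  by have := ler_wpM2l d2_ge0 b1_le; have := ler_wpM2l b1_ge0 d2_le; lra.
have b2d1_le : 2 * (b2 * d1) <= d1 * a + b2 * c.
  by have := ler_wpM2l d1_ge0 b2_le; have := ler_wpM2l b2_ge0 d1_le; lra.
set U := b1 * d2 - b2 * d1; set T := (d1 + d2) * a + (b1 + b2) * c.
have U_le : 2 * U <= T.
  have := mulr_ge0 d1_ge0 a_ge0; have := mulr_ge0 b2_ge0 c_ge0.
  by have := mulr_ge0 b2_ge0 d1_ge0; rewrite /U /T; lra.
have NU_le : - (2 * U) <= T.
  have := mulr_ge0 d2_ge0 a_ge0; have := mulr_ge0 b1_ge0 c_ge0.
  by have := mulr_ge0 b1_ge0 d2_ge0; rewrite /U /T; lra.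
have : 0 <= (T - 2 * U) * (T + 2 * U) by rewrite mulr_ge0 //; lra.
by rewrite !expr2; lra.
Qed.

Section MinkowskiMatrix.
Variable R : realType.

Definition mvec (u : mpt R) : 'cV[R]_3 := \col_i [:: u.1.1; u.1.2; u.2]`_i.

Definition minkJ : 'M[R]_3 := diag_mx (\row_i [:: 1; 1; -1]`_i).

Lemma minkJ_tr : minkJ^T = minkJ.
Proof. exact: tr_diag_mx. Qed.

Lemma minkJ_invol : minkJ *m minkJ = 1%:M.
Proof.
rewrite mulmx_diag; apply/matrixP => i j; rewrite !mxE.
by case: i j => [[|[|[|i]]] Hi] [[|[|[|j]]] Hj] //=; rewrite ?mulrNN mulr1.
Qed.

Lemma minkE (u v : mpt R) : mink u v = ((mvec u)^T *m minkJ *m mvec v) 0 0.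
Proof. by rewrite mul_mx_diag !mxE !big_ord_recr big_ord0 /= !mxE /mink /=; ring. Qed.

Lemma mink_parseval (f : 'I_3 -> mpt R) :
  (forall i, mink (f i) (f i) ^+ 2 = 1) ->
  (forall i j, i != j -> mink (f i) (f j) = 0) ->
  forall u v, mink u v = \sum_i mink (f i) (f i) * mink (f i) u * mink (f i) v.
Proof.
move=> unit_f ortho_f u v.
pose F : 'M[R]_3 := \matrix_(i, j) mvec (f i) j 0.
pose E : 'M[R]_3 := diag_mx (\row_i mink (f i) (f i)).
have rowF k (A : 'M[R]_(3, k)) i j : (F *m A) i j = ((mvec (f i))^T *m A) 0 j.
  by rewrite !mxE; apply: eq_bigr => l _; rewrite !mxE.
have colF k (A : 'M[R]_(k, 3)) i j : (A *m F^T) i j = (A *m mvec (f j)) i 0.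
  by rewrite !mxE; apply: eq_bigr => l _; rewrite !mxE.
have FJF : F *m minkJ *m F^T = E.
  apply/matrixP => i j; rewrite -mulmxA rowF mulmxA colF -minkE !mxE.
  by have [<-|/ortho_f ->] := eqVneq i j; rewrite ?mulr1n ?mulr0n.
have EE : E *m E = 1%:M.
  by rewrite mulmx_diag; apply/matrixP => i j; rewrite !mxE -expr2 unit_f.
have FEF := frame_completeness minkJ_invol EE FJF.
pose w z := F *m minkJ *m mvec z.
have wE z i : w z i 0 = mink (f i) z by rewrite /w -mulmxA rowF mulmxA minkE.
have -> : mink u v = ((w u)^T *m E *m w v) 0 0.
  have JJJ : minkJ = minkJ *m (F^T *m E *m F) *m minkJ.
    by rewrite FEF minkJ_invol mul1mx.
  by rewrite minkE {1}JJJ /w !trmx_mul minkJ_tr !mulmxA.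
rewrite mul_mx_diag [LHS]mxE; apply: eq_bigr => i _.
by rewrite !(mxE, wE) [X in X * _]mulrC.
Qed.

End MinkowskiMatrix.

Section HyperboloidModel.
Variable R : realType.
Implicit Types (u v w p q : mpt R) (a b : R).

Definition mcomb a b p q : mpt R := madd (Defs.mscale a p) (Defs.mscale b q).

Definition mnormalize w : mpt R := Defs.mscale (Num.sqrt (- mink w w))^-1 w.

Lemma mink_sym u v : mink u v = mink v u.
Proof. by rewrite /mink; ring. Qed.

Lemma mink_mscalel a u v : mink (Defs.mscale a u) v = a * mink u v.
Proof. by rewrite /mink /=; ring. Qed.

Lemma mink_mscaler a u v : mink u (Defs.mscale a v) = a * mink u v.
Proof. by rewrite /mink /=; ring. Qed.

Lemma mink_mcombr u a b p q : mink u (mcomb a b p q) = a * mink u p + b * mink u q.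
Proof. by rewrite /mink /=; ring. Qed.

Lemma mscale_mcomb c a b p q :
  Defs.mscale c (mcomb a b p q) = mcomb (c * a) (c * b) p q.
Proof. by rewrite /mcomb /madd /Defs.mscale /= !mulrDr !mulrA. Qed.

Lemma mink_onH_lt0 u v : onH u -> onH v -> mink u v < 0.
Proof.
case: u => [[u1 u2] u3]; case: v => [[v1 v2] v3].
rewrite /onH /mink /= => -[uu u3_gt0] [vv v3_gt0].
set s := u1 * v1 + u2 * v2.
(* (u3 v3)^2 = (1 + |u'|^2) (1 + |v'|^2) > |u'|^2 |v'|^2 >= (u'.v')^2 *)
have s2_lt : s ^+ 2 < (u3 * v3) ^+ 2.
  have -> : (u3 * v3) ^+ 2 = (1 + u1 * u1 + u2 * u2) * (1 + v1 * v1 + v2 * v2).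
    by rewrite exprMn !expr2; congr (_ * _); lra.
  by have := sqr_ge0 (u1 * v2 - u2 * v1); rewrite /s; nra.
have uv3_gt0 : 0 < u3 * v3 by rewrite mulr_gt0.
suff : s < u3 * v3 by rewrite /s; lra.
have [s_le0|s_gt0] := lerP s 0; first lra.
by rewrite -(ltr_pXn2r (_ : 0 < 2)%N) ?nnegrE ?(ltW s_gt0) ?(ltW uv3_gt0).
Qed.

Lemma mcomb_timelike p q a b :
  onH p -> onH q -> 0 <= a -> 0 <= b -> 0 < a + b ->
  mink (mcomb a b p q) (mcomb a b p q) < 0 /\ 0 < (mcomb a b p q).2.
Proof.
move=> p_onH q_onH a_ge0 b_ge0 ab_gt0; split; last first.
  by case: p_onH q_onH => [_ p2_gt0] [_ q2_gt0]; exact: comb_gt0.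
have cross_le0 : a * b * mink p q <= 0.
  by rewrite mulr_ge0_le0 ?mulr_ge0 // ltW // mink_onH_lt0.
have sq_gt0 : 0 < a * a + b * b.
  by have := sqr_ge0 (a - b); have := exprn_gt0 2 ab_gt0; rewrite !expr2; lra.
rewrite mink_mcombr !(mink_sym (mcomb _ _ _ _)) !mink_mcombr (mink_sym q p).
by case: p_onH q_onH => [-> _] [-> _]; lra.
Qed.

Lemma onH_mnormalize w : mink w w < 0 -> 0 < w.2 -> onH (mnormalize w).
Proof.
move=> ww_lt0 w2_gt0.
have N_gt0 : 0 < Num.sqrt (- mink w w) by rewrite sqrtr_gt0 oppr_gt0.
split; last by rewrite mulr_gt0 ?invr_gt0.
rewrite mink_mscalel mink_mscaler mulrA -expr2 exprVn.
rewrite sqr_sqrtr ?oppr_ge0 ?(ltW ww_lt0) //.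
by rewrite invrN mulNr mulVf ?lt_eqF.
Qed.

Lemma geod_seg_mnormalize p q a b : 0 <= a -> 0 <= b ->
  mink (mcomb a b p q) (mcomb a b p q) < 0 -> 0 < (mcomb a b p q).2 ->
  geod_seg p q (mnormalize (mcomb a b p q)).
Proof.
move=> a_ge0 b_ge0 ww_lt0 w2_gt0; split; first exact: onH_mnormalize.
rewrite /mnormalize mscale_mcomb; set c := _^-1.
have c_ge0 : 0 <= c by rewrite invr_ge0 sqrtr_ge0.
by exists (c * a), (c * b); rewrite !mulr_ge0.
Qed.

Lemma arcosh_le_ln1Dsqrt2 (t : R) :
  0 < t -> t ^+ 2 <= 2 -> arcosh t <= ln (1 + Num.sqrt 2).
Proof.
move=> t_gt0 t2_le2.
have := sqrtr_ge0 (t ^+ 2 - 1); have := sqrtr_ge0 (2 : R) => sqrt2_ge0 sqrt_ge0.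
rewrite /arcosh ler_ln ?posrE; try lra.
have t_le : t <= Num.sqrt 2 by rewrite -(ger0_norm (ltW t_gt0)) -sqrtr_sqr ler_sqrt.
suff : Num.sqrt (t ^+ 2 - 1) <= 1 by lra.
by rewrite -{2}sqrtr1 ler_sqrt //; lra.
Qed.

End HyperboloidModel.

Section OrthonormalFrame.
Variables (R : realType) (x n1 n2 : mpt R).
Hypotheses (x_onH : onH x) (n1_unit : unit_normal n1) (n2_unit : unit_normal n2).
Hypotheses (x_n1 : mink x n1 = 0) (x_n2 : mink x n2 = 0) (n1_n2 : mink n1 n2 = 0).

Lemma mink_frame (u v : mpt R) : mink u v =
  - (mink x u * mink x v) + mink n1 u * mink n1 v + mink n2 u * mink n2 v.
Proof.
have [xx _] := x_onH; have n1n1 : mink n1 n1 = 1 := n1_unit.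
have n2n2 : mink n2 n2 = 1 := n2_unit.
pose f (i : 'I_3) := nth x [:: x; n1; n2] i.
rewrite (@mink_parseval _ f) => [|i|i j].
- by rewrite !big_ord_recr big_ord0 /= add0r /f /= xx n1n1 n2n2; ring.
- by case: i => [[|[|[|i]]] Hi] //=; rewrite /f /= ?xx ?n1n1 ?n2n2 ?sqrrN expr1n.
case: i j => [[|[|[|i]]] Hi] [[|[|[|j]]] Hj] //= _;
  by rewrite /f /= ?x_n1 ?x_n2 ?n1_n2 // mink_sym ?x_n1 ?x_n2 ?n1_n2.
Qed.

Lemma onH_frame_sqr (u : mpt R) : onH u ->
  mink x u ^+ 2 = 1 + mink n1 u ^+ 2 + mink n2 u ^+ 2.
Proof. by case=> uu _; have := mink_frame u u; rewrite uu !expr2; lra. Qed.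

Lemma onH_frame_norm_le (u : mpt R) : onH u ->
  `|mink n1 u| <= - mink x u /\ `|mink n2 u| <= - mink x u.
Proof.
move=> u_onH; have := onH_frame_sqr u_onH; have := mink_onH_lt0 x_onH u_onH.
rewrite -oppr_gt0 => xu_gt0 xu_sqr.
rewrite -!(ler_sqr (normr_ge0 _) (ltW xu_gt0)) !real_normK ?num_real // sqrrN xu_sqr.
by have := sqr_ge0 (mink n1 u); have := sqr_ge0 (mink n2 u); split; lra.
Qed.

Lemma hdist_mnormalize_le (w : mpt R) : mink w w < 0 -> 0 < w.2 ->
  2 * (mink n1 w ^+ 2 + mink n2 w ^+ 2) <= mink x w ^+ 2 ->
  hdist x (mnormalize w) <= ln (1 + Num.sqrt 2).
Proof.
move=> ww_lt0 w2_gt0 w_close; apply: arcosh_le_ln1Dsqrt2.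
  by rewrite oppr_gt0; apply: mink_onH_lt0 => //; exact: onH_mnormalize.
rewrite /mnormalize mink_mscaler sqrrN exprMn exprVn.
rewrite sqr_sqrtr ?oppr_ge0 ?(ltW ww_lt0) // ler_pdivrMl ?oppr_gt0 //.
by have := mink_frame w w; move: w_close; rewrite !expr2; lra.
Qed.

Lemma opposite_quadrants_weights (p q : mpt R) :
  quadrant n1 n2 p -> quadrant (mneg n1) (mneg n2) q ->
  exists a b : R, [/\ 0 <= a, 0 <= b, 0 < a + b &
    2 * (mink n1 (mcomb a b p q) ^+ 2 + mink n2 (mcomb a b p q) ^+ 2)
      <= mink x (mcomb a b p q) ^+ 2].
Proof.
move=> [p_onH [b1_ge0 b2_ge0]] [q_onH [d1_ge0 d2_ge0]].
have mink_mneg n : mink (mneg n) q = - mink n q by rewrite mink_mscalel mulN1r.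
rewrite !mink_mneg in d1_ge0 d2_ge0.
have [b1_le b2_le] := onH_frame_norm_le p_onH.
have [d1_le d2_le] := onH_frame_norm_le q_onH.
have [S_le0|S_gt0] := lerP (mink n1 p + mink n2 p - (mink n1 q + mink n2 q)) 0.
  (* p lies on both lines, so p = x and z = p will do *)
  have [b1_0 b2_0] : mink n1 p = 0 /\ mink n2 p = 0 by split; lra.
  exists 1, 0; split; rewrite ?addr0 ?ler01 ?ltr01 //.
  by have := sqr_ge0 (mink x p); rewrite !mink_mcombr b1_0 b2_0 !expr2; lra.
exists (- (mink n1 q + mink n2 q)), (mink n1 p + mink n2 p); split; try lra.
move: b1_le b2_le d1_le d2_le; rewrite !ler_norml.
move=> /andP[_ b1_le] /andP[_ b2_le] /andP[d1_le _] /andP[d2_le _].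
have d1_le' : - mink n1 q <= - mink x q by lra.
have d2_le' : - mink n2 q <= - mink x q by lra.
have := cross_diff_sqr_le b1_ge0 b1_le b2_ge0 b2_le d1_ge0 d1_le' d2_ge0 d2_le'.
by rewrite !mink_mcombr !expr2; lra.
Qed.

End OrthonormalFrame.

Theorem lemma9 (R : realType) (x n1 n2 : mpt R) :
  onH x ->
  unit_normal n1 -> unit_normal n2 ->
  hline n1 x -> hline n2 x ->
  mink n1 n2 = 0 ->
  forall p q : mpt R,
    quadrant n1 n2 p -> quadrant (mneg n1) (mneg n2) q ->
    exists z, geod_seg p q z /\ hdist x z <= ln (1 + Num.sqrt 2).
Proof.
move=> x_onH n1_unit n2_unit [_ n1_x] [_ n2_x] n1_n2 p q p_quad q_quad.
have x_n1 : mink x n1 = 0 by rewrite mink_sym.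
have x_n2 : mink x n2 = 0 by rewrite mink_sym.
have [a [b [a_ge0 b_ge0 ab_gt0 w_close]]] :=
  opposite_quadrants_weights x_onH n1_unit n2_unit x_n1 x_n2 n1_n2 p_quad q_quad.
have [[p_onH _] [q_onH _]] := (p_quad, q_quad).
have [ww_lt0 w2_gt0] := mcomb_timelike p_onH q_onH a_ge0 b_ge0 ab_gt0.
exists (mnormalize (mcomb a b p q)); split; first exact: geod_seg_mnormalize.
exact: hdist_mnormalize_le x_onH n1_unit n2_unit x_n1 x_n2 n1_n2 _ ww_lt0 w2_gt0 w_close.
Qed.
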